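(* Every finite graph $G$ is $(\lceil \mathrm{mad}(G)/2\rceil+1,\,1)$-choosable.
   Context: The maximum average degree of $G$ is $\mathrm{mad}(G)=\max\{2|E(H)|/|V(H)| : H \text{ a subgraph of } G\}$. A $(k,d)$-list assignment for $G$ assigns to each vertex $v$ a list $L(v)$ of at least $k$ colors such that $|L(x)\cap L(y)|\le d$ whenever $x$ and $y$ are adjacent. $G$ is $(k,d)$-choosable if for every $(k,d)$-list assignment $L$ there is a proper vertex coloring $\varphi$ of $G$ with $\varphi(v)\in L(v)$ for all $v$. *)

From mathcomp Require Import all_boot all_order all_algebra.
Set Implicit Arguments. Unset Strict Implicit. Unset Printing Implicit Defensive.
Import Order.TTheory GRing.Theory Num.Theory.

Definition simple_graph (T : finType) (e : rel T) : Prop :=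
  symmetric e /\ irreflexive e.

Definition edges (T : finType) (e : rel T) : {set {set T}} :=
  [set [set x; y] | x in T, y in T & e x y].

Definition is_subgraph (T : finType) (e : rel T) (S : {set T}) (F : {set {set T}}) : bool :=
  (F \subset edges e) && [forall f in F, f \subset S].

(* Maximum average degree: max of 2|E(H)|/|V(H)| over (nonempty) subgraphs H
   (0 for the empty graph). *)
Definition mad (T : finType) (e : rel T) : rat :=
  \big[Num.max/0%R]_(H : {set T} * {set {set T}} | is_subgraph e H.1 H.2 && (H.1 != set0))
     ((2 * #|H.2|)%:R / #|H.1|%:R)%R.

Definition kd_list_assignment (T : finType) (e : rel T) (k d : nat)
    (C : finType) (L : T -> {set C}) : Prop :=
  (forall v, k <= #|L v|) /\ (forall x y, e x y -> #|L x :&: L y| <= d).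

Definition kd_choosable (T : finType) (e : rel T) (k d : nat) : Prop :=
  forall (C : finType) (L : T -> {set C}), kd_list_assignment e k d L ->
    exists phi : T -> C, (forall v, phi v \in L v) /\ (forall x y, e x y -> phi x != phi y).

From mathcomp Require Import all_boot all_order all_algebra.
From mathcomp Require Import zify.
Set Implicit Arguments. Unset Strict Implicit. Unset Printing Implicit Defensive.
Import Order.TTheory GRing.Theory Num.Theory.

(* If mad(G) <= 2m, every subgraph H of G has |E(H)| <= m |V(H)|, and then G has an
   orientation in which every out-degree is at most m (Hakimi).  Indeed, take an
   orientation minimising the excess sum_v max(0, d+(v) - m).  If some v has
   d+(v) > m, then either a directed path leads from v to some w with d+(w) < m,
   and reversing it lowers the excess, or every vertex reachable from v has
   out-degree at least m, and the reachable set spans more than m times as many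
   edges as it has vertices.
   Given such an orientation and lists of size m + 1, colour v from L(v) minus the
   lists of its out-neighbours.  Adjacent lists share at most one colour, so at most
   m colours are removed; and for an arc x -> y the colour of x avoids L(y), which
   contains the colour of y. *)

Lemma eq_set2 (T : finType) (x y a b : T) :
  ([set x; y] == [set a; b]) = (x == a) && (y == b) || (x == b) && (y == a).
Proof.
apply/eqP/idP => [E | /orP[] /andP[/eqP-> /eqP->] //]; last by rewrite setUC.
have xab : x \in [set a; b] by rewrite -E set21.
have yab : y \in [set a; b] by rewrite -E set22.
have axy : a \in [set x; y] by rewrite E set21.
have bxy : b \in [set x; y] by rewrite E set22.
move: xab yab axy bxy {E}.
by do ![case/set2P=> ?; subst]; rewrite !eqxx ?orbT.
Qed.

Lemma card_bigcup_le (I T : finType) (P : pred I) (A : I -> {set T}) :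
  #|\bigcup_(i | P i) A i| <= \sum_(i | P i) #|A i|.
Proof.
elim/big_ind2: _ => [|m U n V le_Um le_Vn|//]; first by rewrite cards0.
by rewrite (leq_trans (leq_card_setU U V)) ?leq_add.
Qed.

Section Orientation.
Variables (T : finType) (e : rel T).
Hypothesis e_sym : symmetric e.

Definition orientation (o : rel T) : Prop :=
  [/\ subrel o e, forall x y, e x y -> o x y || o y x & forall x y, o x y -> ~~ o y x].

Definition outdeg (o : rel T) (u : T) : nat := #|[pred y | o u y]|.

Definition reverse_edge (o : rel T) (a b : T) : rel T :=
  fun x y => if [set x; y] == [set a; b] then o y x else o x y.

Lemma orientation_reverse_edge o a b : orientation o -> orientation (reverse_edge o a b).
Proof.
case=> sub cover asym.
have swap x y : [set y; x] = [set x; y] :> {set T} by rewrite setUC.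
split=> x y; rewrite /reverse_edge /= ?(swap x y); case: ifP => _.
- by rewrite e_sym => /sub.
- exact: sub.
- by rewrite orbC; apply: cover.
- exact: cover.
- exact: asym.
- exact: asym.
Qed.

Lemma outdeg_reverse_edge o a b : orientation o -> o a b ->
  forall u, outdeg (reverse_edge o a b) u + (u == a) = outdeg o u + (u == b).
Proof.
case=> _ _ asym oab u; have nboa := asym _ _ oab.
have nab : a != b by apply: contraNneq nboa => ab; rewrite -ab in oab *.
rewrite /outdeg /reverse_edge.
have [->|nua] := eqVneq u a.
  rewrite (negPf nab) addn0 (cardD1 b [pred y | o a y]) inE oab addn1 add1n.
  congr S; apply: eq_card => y; rewrite !inE eq_set2 eqxx (negPf nab) /= orbF.
  by case: eqP => [->|]; rewrite ?(negPf nboa) ?oab.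
have [->|nub] := eqVneq u b.
  have card_predU1 : #|[pred y | o b y]|.+1 = #|[predU1 a & [pred y | o b y]]|.
    by rewrite cardU1 inE nboa.
  rewrite addn0 addn1 card_predU1; apply: eq_card => y.
  rewrite !inE eq_set2 eqxx [b == a]eq_sym (negPf nab) /=.
  by case: eqP => [->|]; rewrite ?(negPf nboa) ?oab.
rewrite !addn0; apply: eq_card => y.
by rewrite !inE eq_set2 (negPf nua) (negPf nub).
Qed.

Lemma orientation_reverse_path o x p : orientation o -> path o x p -> uniq (x :: p) ->
  exists2 o', orientation o' &
    forall u, outdeg o' u + (u == x) = outdeg o u + (u == last x p).
Proof.
elim: p o x => [|y p IHp] o x o_or; first by exists o.
rewrite /= inE negb_or => /andP[oxy o_p] /andP[/andP[nxy xNp] uniq_p].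
have o_flip := orientation_reverse_edge x y o_or.
have off_x : {in [pred w | w != x] &, o =2 reverse_edge o x y}.
  by move=> w1 w2 w1x w2x; rewrite /reverse_edge eq_set2 (negPf w1x) (negPf w2x) andbF.
have flip_p : path (reverse_edge o x y) y p.
  rewrite -(eq_in_path off_x) //=; apply/andP; split; first by rewrite ?inE eq_sym.
  by apply/allP => w wp; rewrite ?inE; apply: contraNneq xNp => <-.
have [o' o'_or outdeg_o'] := IHp _ _ o_flip flip_p uniq_p.
exists o' => // u; have := outdeg_o' u; have := outdeg_reverse_edge o_or oxy u; lia.
Qed.

Definition out_edges (o : rel T) (R : {set T}) : {set {set T}} :=
  [set [set p.1; p.2] | p in [set p : T * T | (p.1 \in R) && o p.1 p.2]].

Lemma card_out_edges o R : orientation o ->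
  #|out_edges o R| = \sum_(w in R) outdeg o w.
Proof.
case=> _ _ asym; rewrite card_in_imset; last first.
  move=> [a b] [c d]; rewrite !inE /= => /andP[_ oab] /andP[_ ocd] /eqP.
  rewrite eq_set2 => /orP[/andP[/eqP-> /eqP->] // | /andP[/eqP ac /eqP bd]].
  by subst; move: (asym _ _ ocd); rewrite oab.
rewrite /outdeg; under [RHS]eq_bigr do rewrite -sum1_card.
by rewrite pair_big_dep -sum1_card; apply: eq_bigl => p; rewrite inE.
Qed.

Lemma is_subgraph_out_edges o (R : {set T}) : orientation o ->
  (forall w u, w \in R -> o w u -> u \in R) -> is_subgraph e R (out_edges o R).
Proof.
case=> sub _ _ closedR; apply/andP; split.
  apply/subsetP => f /imsetP[[a b]]; rewrite inE /= => /andP[_ oab] ->.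
  by apply/imset2P; exists a b; rewrite ?inE ?sub.
apply/forall_inP => f /imsetP[[a b]]; rewrite inE /= => /andP[aR oab] ->.
by apply/subsetP => z /set2P[]->; last exact: closedR oab.
Qed.

Lemma exists_orientation : irreflexive e -> exists o, orientation o.
Proof.
move=> e_irr; exists (fun x y => e x y && (enum_rank x < enum_rank y)); split.
- by move=> x y /andP[].
- move=> x y exy; rewrite exy -e_sym exy /= -neq_ltn.
  by apply: contraTneq exy => /ord_inj/enum_rank_inj->; rewrite e_irr.
- by move=> x y /andP[_ lt_xy]; rewrite negb_and -leqNgt ltnW ?orbT.
Qed.

Definition sparse (m : nat) : Prop :=
  forall (R : {set T}) F, is_subgraph e R F -> R != set0 -> #|F| <= m * #|R|.

Definition excess (m : nat) (o : rel T) : nat := \sum_u (outdeg o u - m).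

Lemma excess_reverse_path m o v w : orientation o ->
  m < outdeg o v -> outdeg o w < m -> connect o v w ->
  exists2 o', orientation o' & excess m o' < excess m o.
Proof.
move=> o_or v_hi w_lo /connectP[p p_path w_last]; subst w; move: w_lo.
case: (shortenP p_path) => q q_path q_uniq _; set w := last v q => w_lo.
have [o' o'_or outdeg_o'] := orientation_reverse_path o_or q_path q_uniq.
have nvw : v != w by apply: contraTneq v_hi => ->; rewrite -leqNgt ltnW.
have outdeg_drop u : outdeg o' u - m + (u == v) = outdeg o u - m.
  have := outdeg_o' u; have [->|_] := eqVneq u v; first by rewrite (negPf nvw); lia.
  by have [->|_] := eqVneq u w; lia.
exists o' => //; rewrite /excess; under [X in _ < X]eq_bigr do rewrite -outdeg_drop.
by rewrite big_split /= -[X in X < _]addn0 ltn_add2l (bigD1 v) //= eqxx.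
Qed.

Lemma reachable_outdeg_lt m o v : sparse m -> orientation o -> m < outdeg o v ->
  exists2 w, connect o v w & outdeg o w < m.
Proof.
move=> e_sparse o_or v_hi; set R := [set w | connect o v w].
have R_nonempty : R != set0 by apply/set0Pn; exists v; rewrite inE connect0.
suff: [exists w in R, outdeg o w < m] by case/exists_inP => w; rewrite inE; exists w.
have R_closed w u : w \in R -> o w u -> u \in R.
  by rewrite !inE => vw owu; apply: connect_trans vw (connect1 owu).
have R_sparse := e_sparse R _ (is_subgraph_out_edges o_or R_closed).
apply: contraTT (R_sparse R_nonempty) => /exists_inPn no_lo.
rewrite -ltnNge card_out_edges // mulnC -sum_nat_const.
rewrite (bigD1 v) ?[X in _ < X](bigD1 v) ?inE ?connect0 //= -addSn leq_add //.
by apply: leq_sum => w /andP[wR _]; rewrite leqNgt no_lo.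
Qed.

Theorem exists_orientation_outdeg_le m : irreflexive e -> sparse m ->
  exists2 o, orientation o & forall u, outdeg o u <= m.
Proof.
move=> e_irr e_sparse; have [o0 o0_or] := exists_orientation e_irr.
have [n] := ubnP (excess m o0); elim: n o0 o0_or => // n IHn o o_or /ltnSE excess_le.
have [o_le|] := boolP [forall u, outdeg o u <= m].
  by exists o => // u; apply: (forallP o_le).
rewrite negb_forall => /existsP[v]; rewrite -ltnNge => v_hi.
have [w vw w_lo] := reachable_outdeg_lt e_sparse o_or v_hi.
have [o' o'_or lt_excess] := excess_reverse_path o_or v_hi w_lo vw.
exact: IHn o' o'_or (leq_trans lt_excess excess_le).
Qed.

End Orientation.

Lemma list_coloring_of_orientation (T C : finType) (e o : rel T) (m : nat)
    (L : T -> {set C}) :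
  orientation e o -> (forall u, outdeg o u <= m) -> (forall v, m < #|L v|) ->
  (forall x y, e x y -> #|L x :&: L y| <= 1) ->
  exists phi : T -> C, (forall v, phi v \in L v) /\ (forall x y, e x y -> phi x != phi y).
Proof.
case=> sub cover _ outdeg_le L_big L_meet.
pose blocked v := \bigcup_(u | o v u) L u.
have blocked_le v : #|L v :&: blocked v| <= m.
  have cover_meets : L v :&: blocked v \subset \bigcup_(u | o v u) (L v :&: L u).
    apply/subsetP => c /setIP[cLv /bigcupP[u ovu cLu]].
    by apply/bigcupP; exists u; rewrite ?inE ?cLv.
  apply: leq_trans (subset_leq_card cover_meets) _.
  apply: leq_trans (card_bigcup_le _ _) (leq_trans _ (outdeg_le v)).
  rewrite /outdeg -sum1_card; apply: leq_sum => u ovu; exact: L_meet (sub _ _ ovu).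
have free v : exists c, c \in L v :\: blocked v.
  apply/set0Pn; rewrite -card_gt0.
  by have := cardsID (blocked v) (L v); have := L_big v; have := blocked_le v; lia.
exists (fun v => xchoose (free v)); split=> [v|].
  by have /setDP[] := xchooseP (free v).
suff oriented x y : o x y -> xchoose (free x) != xchoose (free y).
  by move=> x y /cover/orP[/oriented // | /oriented]; rewrite eq_sym.
move=> oxy; have /setDP[_ x_free] := xchooseP (free x).
have /setDP[y_col _] := xchooseP (free y).
by apply: contraNneq x_free => ->; apply/bigcupP; exists y.
Qed.

Lemma le_double_ceil_half (R : archiRealFieldType) (x : R) :
  (0 <= x)%R -> (x <= (2 * `|Num.ceil (x / 2%:R)|%N)%:R)%R.
Proof.
move=> x_ge0; have ceil_nneg : (0 <= Num.ceil (x / 2%:R))%R.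
  by rewrite ceil_ge0 (lt_le_trans _ (divr_ge0 x_ge0 (ler0n _ 2))) ?ltrN10.
rewrite natrM mulrC -ler_pdivrMr ?ltr0n // natr_absz ger0_norm ?ceil_nneg //.
exact: ceil_ge.
Qed.

Section MaximumAverageDegree.
Variables (T : finType) (e : rel T).

Lemma mad_ge0 : (0 <= mad e)%R.
Proof.
apply: (big_ind (fun x : rat => 0 <= x)%R) => // [x y x_ge0 _|i _].
  by rewrite le_max x_ge0.
by rewrite divr_ge0.
Qed.

Lemma le_mad (R : {set T}) F : is_subgraph e R F -> R != set0 ->
  ((2 * #|F|)%:R / #|R|%:R <= mad e)%R.
Proof.
by move=> RF R0; rewrite /mad (bigD1 (R, F)) /= ?RF ?R0 // le_max lexx.
Qed.

Lemma sparse_of_mad_le m : (mad e <= (2 * m)%:R)%R -> sparse e m.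
Proof.
move=> mad_le R F RF R0; have := le_trans (le_mad RF R0) mad_le.
by rewrite ler_pdivrMr ?ltr0n ?card_gt0 // -natrM ler_nat -mulnA leq_pmul2l.
Qed.

End MaximumAverageDegree.

Theorem lemma1 (T : finType) (e : rel T) :
  simple_graph e ->
  kd_choosable e (`|Num.ceil (mad e / 2%:R)%R|%N + 1) 1.
Proof.
move=> [e_sym e_irr] C L [L_big L_meet].
have mad_le := le_double_ceil_half (mad_ge0 e).
have [o o_or outdeg_le] :=
  exists_orientation_outdeg_le e_sym e_irr (sparse_of_mad_le mad_le).
by apply: list_coloring_of_orientation o_or outdeg_le _ L_meet => v; rewrite -addn1.
Qed.
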